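(* Let $G=(V,E)$ be a graph with a partition $(V_1,V_2)$ of $V$ such that $G[V_1]$ and $G[V_2]$ are $P_5$-free. Let $X\subseteq V_2$ be such that no vertex of $X$ has a neighbour in $V_1$ and exactly one vertex of $V_2\setminus X$ has a neighbour in $X$. If there exists a set $F\subseteq V_2$ such that $G\setminus F$ is $P_5$-free and $F\cap X\neq\emptyset$, then there exists a set $F'\subseteq V_2$ such that $G\setminus F'$ is $P_5$-free, $F'\cap X=\emptyset$, and $|F'|\le|F|$.
   Context: Graphs are finite, simple and undirected. A $P_5$ is a path on $5$ vertices (as a not necessarily induced subgraph); a graph is $P_5$-free if it contains no $P_5$. $G[X]$ denotes the subgraph induced by $X$, and $G\setminus F=G[V\setminus F]$. *)

From mathcomp Require Import all_boot.
Set Implicit Arguments. Unset Strict Implicit. Unset Printing Implicit Defensive.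

Definition simple_graph (T : finType) (e : rel T) : Prop :=
  symmetric e /\ irreflexive e.

(* G[S] contains a P5 (as a not necessarily induced subgraph): five distinct
   vertices v0..v4 of S with v_i v_{i+1} an edge for i < 4. *)
Definition has_P5_in (T : finType) (e : rel T) (S : {set T}) : Prop :=
  exists v : 'I_5 -> T,
    injective v /\ (forall i, v i \in S) /\
    (forall i j : 'I_5, val j = (val i).+1 -> e (v i) (v j)).

Definition P5_free_in (T : finType) (e : rel T) (S : {set T}) : Prop :=
  ~ has_P5_in e S.

From mathcomp Require Import all_boot.
Set Implicit Arguments. Unset Strict Implicit. Unset Printing Implicit Defensive.

(* Take F' := (F \ X) + u. In G \ F' the vertex u is gone, and u was the only
   neighbour of X outside X, so every path of G \ F' lies entirely inside X or
   entirely outside X. A P5 inside X is a P5 of G[V2]; a P5 outside X avoids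
   F \ X and X, hence all of F. Both are excluded, and |F'| <= |F| because
   u replaces at least one deleted vertex of X. *)

Lemma ord_path_const n (f : 'I_n.+1 -> bool) :
  (forall i j : 'I_n.+1, val j = (val i).+1 -> f i = f j) ->
  forall i, f i = f ord0.
Proof.
move=> step [k lt_kn]; elim: k lt_kn => [|k IHk] lt_kn.
  by congr f; apply: val_inj.
by rewrite -(IHk (ltnW lt_kn)); symmetry; apply: step.
Qed.

Section P5InSubsets.

Variables (T : finType) (e : rel T).

Lemma has_P5_in_subset (S1 S2 : {set T}) :
  S1 \subset S2 -> has_P5_in e S1 -> has_P5_in e S2.
Proof.
move=> /subsetP sS12 [v [inj_v [vS1 vpath]]].
by exists v; split=> //; split=> // i; apply: sS12.
Qed.

Lemma has_P5_in_split (S A : {set T}) :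
  symmetric e -> {in S :&: A & S :\: A, forall a b, ~~ e a b} ->
  has_P5_in e S -> has_P5_in e (S :&: A) \/ has_P5_in e (S :\: A).
Proof.
move=> e_sym sepA [v [inj_v [vS vpath]]].
have edge_sameA : {in S &, forall a b, e a b -> (a \in A) = (b \in A)}.
  move=> a b aS bS eab; apply/idP/idP => [aA | bA]; apply: contraTT eab => nA.
    by apply: sepA; rewrite !inE ?aA ?aS ?nA ?bS.
  by rewrite e_sym; apply: sepA; rewrite !inE ?bA ?aS ?nA ?bS.
have sideA i : (v i \in A) = (v ord0 \in A).
  apply: (ord_path_const (f := fun k => v k \in A)) => j k /vpath.
  by apply: edge_sameA.
case: (boolP (v ord0 \in A)) => v0A; [left | right];
  by exists v; split=> //; split=> // i; rewrite !inE sideA v0A vS.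
Qed.

End P5InSubsets.

Lemma leq_card_setU1D (T : finType) (F X : {set T}) (u : T) :
  F :&: X != set0 -> #|u |: (F :\: X)| <= #|F|.
Proof.
move=> meetFX; rewrite cardsU1 -(cardsID X F) leq_add2r.
by apply: leq_trans (leq_b1 _) _; rewrite card_gt0.
Qed.

(* V1 and V2 := ~: V1 partition V; G \ F is G[~: F]. *)
Theorem lemma7 (T : finType) (e : rel T) (V1 X F : {set T}) :
  simple_graph e ->
  P5_free_in e V1 ->
  P5_free_in e (~: V1) ->
  X \subset ~: V1 ->
  (forall x y, x \in X -> y \in V1 -> ~~ e x y) ->
  (exists! u, u \in (~: V1) :\: X /\ exists2 x, x \in X & e u x) ->
  F \subset ~: V1 ->
  P5_free_in e (~: F) ->
  F :&: X != set0 ->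
  exists F' : {set T},
    [/\ F' \subset ~: V1, P5_free_in e (~: F'), F' :&: X = set0 & #|F'| <= #|F|].
Proof.
move=> [e_sym _] _ freeV2 sXV2 noXV1 [u [[uV2X _] u_uniq]] sFV2 freeF meetFX.
move: uV2X; rewrite inE => /andP [uX uV2].
have X_nbhd_u a b : a \in X -> b \notin X -> b != u -> ~~ e a b.
  move=> aX bX /eqP bu; apply/negP => eab; case: (boolP (b \in V1)) => bV1.
    by move: (noXV1 a b aX bV1); rewrite eab.
  apply: bu; symmetry; apply: u_uniq; split; first by rewrite !inE bX bV1.
  by exists a; rewrite // e_sym.
exists (u |: (F :\: X)); split; last exact: leq_card_setU1D.
- by rewrite subUset sub1set uV2 (subset_trans (subsetDl F X)).
- move=> P5; case: (has_P5_in_split (A := X) e_sym _ P5) => [a b | P | P].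
  + by rewrite !inE !negb_or => /andP [_ aX] /and3P [bX bu _]; apply: X_nbhd_u.
  + by apply: freeV2; apply: has_P5_in_subset P; rewrite subIset // sXV2 orbT.
  + apply: freeF; apply: has_P5_in_subset P; apply/subsetP => y.
    by rewrite !inE negb_or => /and3P [-> _]; rewrite andTb.
- apply/setP => y; rewrite !inE; case: eqP => [-> | _]; first by rewrite (negbTE uX).
  by case: (y \in X); rewrite ?andbF.
Qed.
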